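(* Let $n\ge 2$. If some set maximizing $\overline{re}$ over nonempty subsets of $\mathbb{S}$ has cardinality $2$, then $\{1,2\}$ maximizes $\overline{re}$ over nonempty subsets of $\mathbb{S}$ (no assumption on the size of the equilibrium demands is needed).
   Context: Market model: sellers $\mathbb{S}=\{1,\dots,n\}$, product qualities $\theta_1\ge\dots\ge\theta_n\ge0$. For displayed set $S$ and prices $p_i\ge0$: $a_i=e^{\theta_i-p_i}$, MNL demand $q_i=a_i/(1+\sum_{j\in S}a_j)$; sellers in $S$ play the Bertrand game (seller $i$ chooses $p_i\ge0$ to maximize $p_iq_i$). $V:(0,\infty)\to(0,1)$: $V(x)=$ the unique $v\in(0,1)$ with $v\exp(v/(1-v))=x$. For nonempty $S$, $\bar q_0(S)\in(0,1)$ is the unique solution of $\sum_{i\in S}V(\bar q_0e^{\theta_i-1})=1-\bar q_0$, $\bar q_i(S)=V(\bar q_0(S)e^{\theta_i-1})$, and $\overline{re}(S)=\sum_{i\in S}\frac{\bar q_i(S)}{1-\bar q_i(S)}$. *)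

From Stdlib Require Import Reals Lra Lia ClassicalEpsilon.
Open Scope R_scope.

(* Sellers are indexed 0..n-1 (seller k+1 of the paper is index k).
   A subset of the sellers is a boolean predicate S on nat; only indices
   i < n are relevant. *)

Fixpoint rsum (n : nat) (f : nat -> R) : R :=
  match n with
  | O => 0
  | S k => rsum k f + f k
  end.

Definition sum_in (n : nat) (S : nat -> bool) (f : nat -> R) : R :=
  rsum n (fun i => if S i then f i else 0).

Fixpoint card_in (n : nat) (S : nat -> bool) : nat :=
  match n with
  | O => O
  | Datatypes.S k => (card_in k S + (if S k then 1 else 0))%nat
  end.

Definition nonempty_in (n : nat) (S : nat -> bool) : Prop :=
  exists i, (i < n)%nat /\ S i = true.

Definition V (x : R) : R :=
  epsilon (inhabits 0) (fun v => 0 < v < 1 /\ v * exp (v / (1 - v)) = x).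

Definition qbar0 (n : nat) (theta : nat -> R) (S : nat -> bool) : R :=
  epsilon (inhabits 0)
    (fun q => 0 < q < 1 /\
       sum_in n S (fun i => V (q * exp (theta i - 1))) = 1 - q).

Definition qbar (n : nat) (theta : nat -> R) (S : nat -> bool) (i : nat) : R :=
  V (qbar0 n theta S * exp (theta i - 1)).

Definition rebar (n : nat) (theta : nat -> R) (S : nat -> bool) : R :=
  sum_in n S (fun i => qbar n theta S i / (1 - qbar n theta S i)).

Definition maximizes_rebar (n : nat) (theta : nat -> R) (S : nat -> bool) : Prop :=
  nonempty_in n S /\
  forall T : nat -> bool, nonempty_in n T -> rebar n theta T <= rebar n theta S.

(* the set {1,2} of the paper = indices {0,1} *)
Definition top2 (i : nat) : bool := Nat.ltb i 2.

(* In a market of two sellers with weights a = e^(theta-1) and b,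
   the total revenue (sum of the odds v/(1-v) of the equilibrium shares) is a
   function revenue_curve a r of the odds r of the a-seller alone, and the
   a-seller alone in the market sits on the same curve, further to the right.
   The curve is quasi-convex (its slope has the sign of an increasing
   function), and making the competitor stronger moves the a-seller to the
   left.  Hence, as long as the pair beats the a-seller alone, replacing the
   competitor by a stronger seller does not decrease rebar (rebar_exchange).
   Starting from a maximizing pair {i, j} with i < j we first replace i by
   seller 0, then j by seller 1; both steps are licensed because the
   maximizing pair beats every singleton. *)

From Stdlib Require Import Reals Lra Lia ClassicalEpsilon Ranalysis5.
From Coquelicot Require Import Coquelicot.
Open Scope R_scope.

Definition Vinv (v : R) : R := v * exp (v / (1 - v)).

Lemma Vinv_continuous (v : R) : v < 1 -> continuity_pt Vinv v.
Proof.
  intros Hv. apply continuity_pt_filterlim.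
  apply (ex_derive_continuous (V:=R_NormedModule)). unfold Vinv. auto_derive. lra.
Qed.

Lemma Vinv_increasing (u w : R) : 0 < u -> u < w -> w < 1 -> Vinv u < Vinv w.
Proof.
  intros Hu Huw Hw. unfold Vinv.
  assert (Hexp : u / (1 - u) < w / (1 - w)).
  { apply Rmult_lt_reg_r with ((1 - u) * (1 - w)); [nra|].
    field_simplify; lra. }
  apply exp_increasing in Hexp. pose proof (exp_pos (u / (1 - u))). nra.
Qed.

(* Since e^(v/(1-v)) > 1, Vinv lies above the identity; hence V x < x. *)
Lemma Vinv_gt_id (v : R) : 0 < v < 1 -> v < Vinv v.
Proof.
  intros Hv. unfold Vinv.
  assert (0 < v / (1 - v)) by (apply Rdiv_lt_0_compat; lra).
  pose proof (exp_ineq1 (v / (1 - v))). nra.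
Qed.

(* Vinv maps (0,1) onto (0,oo): intermediate value theorem on [0,b],
   where b = (x+1)/(x+2) satisfies Vinv b = b e^(x+1) > x. *)
Lemma Vinv_onto (x : R) : 0 < x -> exists v, 0 < v < 1 /\ Vinv v = x.
Proof.
  intros Hx. set (b := (x + 1) / (x + 2)).
  assert (Hb : 0 < b < 1).
  { unfold b. split; [apply Rdiv_lt_0_compat; lra|].
    apply Rmult_lt_reg_r with (x + 2); [lra|]. field_simplify; lra. }
  assert (Hodds : b / (1 - b) = x + 1) by (unfold b; field; lra).
  assert (Hbx : b * (x + 2) = x + 1) by (unfold b; field; lra).
  assert (HV0 : Vinv 0 = 0) by (unfold Vinv; lra).
  destruct (IVT_interv (fun v => Vinv v - x) 0 b) as [z [Hz Hzx]].
  - intros c Hc. apply continuity_pt_minus; [apply Vinv_continuous; lra|].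
    apply continuity_pt_const. intros u w; reflexivity.
  - lra.
  - lra.
  - unfold Vinv. rewrite Hodds. pose proof (exp_ineq1 (x + 1)). nra.
  - exists z. assert (z <> 0) by (intros ->; lra). lra.
Qed.

Lemma V_spec (x : R) : 0 < x -> 0 < V x < 1 /\ Vinv (V x) = x.
Proof.
  intros Hx. unfold V.
  apply (epsilon_spec (inhabits 0) (fun v => 0 < v < 1 /\ v * exp (v / (1 - v)) = x)).
  now apply Vinv_onto.
Qed.

Lemma V_lt_id (x : R) : 0 < x -> V x < x.
Proof.
  intros Hx. destruct (V_spec x Hx) as [HV HVx]. pose proof (Vinv_gt_id (V x) HV). lra.
Qed.

Lemma Vinv_le (u w : R) : 0 < u -> u <= w -> w < 1 -> Vinv u <= Vinv w.
Proof.
  intros Hu Huw Hw. destruct (Req_dec u w) as [->|E]; [lra|].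
  left. apply Vinv_increasing; lra.
Qed.

Lemma V_increasing (x y : R) : 0 < x -> x < y -> V x < V y.
Proof.
  intros Hx Hxy. destruct (V_spec x Hx) as [HV HVx].
  destruct (V_spec y ltac:(lra)) as [HW HWy].
  destruct (Rlt_or_le (V x) (V y)) as [L|L]; [easy|].
  pose proof (Vinv_le (V y) (V x)). lra.
Qed.

Lemma V_between (u w x : R) :
  0 < u -> u < w -> w < 1 -> Vinv u < x < Vinv w -> u < V x < w.
Proof.
  intros Hu Huw Hw Hx. assert (Hx0 : 0 < x) by (pose proof (Vinv_gt_id u); lra).
  destruct (V_spec x Hx0) as [HV HVx]. split.
  - destruct (Rlt_or_le u (V x)) as [L|L]; [easy|].
    pose proof (Vinv_le (V x) u). lra.
  - destruct (Rlt_or_le (V x) w) as [L|L]; [easy|].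
    pose proof (Vinv_le w (V x)). lra.
Qed.

(* Continuity of V: a neighbourhood (v0-h, v0+h) of v0 = V x0 is the image
   under V of the neighbourhood (Vinv (v0-h), Vinv (v0+h)) of x0. *)
Lemma V_continuous (x0 : R) : 0 < x0 -> continuity_pt V x0.
Proof.
  intros Hx0. destruct (V_spec x0 Hx0) as [Hv0 Hx0v0]. set (v0 := V x0) in *.
  intros eps Heps.
  pose proof (Rmin_l (eps / 2) (Rmin (v0 / 2) ((1 - v0) / 2))).
  pose proof (Rmin_r (eps / 2) (Rmin (v0 / 2) ((1 - v0) / 2))).
  pose proof (Rmin_l (v0 / 2) ((1 - v0) / 2)).
  pose proof (Rmin_r (v0 / 2) ((1 - v0) / 2)).
  assert (0 < Rmin (eps / 2) (Rmin (v0 / 2) ((1 - v0) / 2)))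
    by (repeat apply Rmin_glb_lt; lra).
  set (h := Rmin (eps / 2) (Rmin (v0 / 2) ((1 - v0) / 2))) in *.
  assert (Hh : 0 < h /\ h <= eps / 2 /\ h < v0 /\ v0 + h < 1) by lra.
  assert (Hlo : Vinv (v0 - h) < x0) by (rewrite <- Hx0v0; apply Vinv_increasing; lra).
  assert (Hhi : x0 < Vinv (v0 + h)) by (rewrite <- Hx0v0; apply Vinv_increasing; lra).
  exists (Rmin (x0 - Vinv (v0 - h)) (Vinv (v0 + h) - x0)).
  split; [apply Rmin_glb_lt; lra|].
  intros x [_ Hx]. simpl in *. unfold R_dist in *.
  pose proof (Rmin_l (x0 - Vinv (v0 - h)) (Vinv (v0 + h) - x0)).
  pose proof (Rmin_r (x0 - Vinv (v0 - h)) (Vinv (v0 + h) - x0)).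
  apply Rabs_def2 in Hx.
  assert (HVx : v0 - h < V x < v0 + h) by (apply V_between; try split; lra).
  fold v0. apply Rabs_def1; lra.
Qed.

Lemma rsum_ext (n : nat) (f g : nat -> R) :
  (forall k, (k < n)%nat -> f k = g k) -> rsum n f = rsum n g.
Proof.
  revert f g; induction n as [|n IH]; intros f g H; simpl; [easy|].
  rewrite (IH f g) by (intros; apply H; lia). rewrite H by lia. reflexivity.
Qed.

Lemma rsum_plus (n : nat) (f g : nat -> R) :
  rsum n (fun k => f k + g k) = rsum n f + rsum n g.
Proof. induction n as [|n IH]; simpl; [lra|]. rewrite IH. lra. Qed.

Lemma rsum_mult_r (n : nat) (f : nat -> R) (c : R) :
  rsum n (fun k => f k * c) = rsum n f * c.
Proof. induction n as [|n IH]; simpl; [lra|]. rewrite IH. lra. Qed.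

Lemma rsum_zero (n : nat) : rsum n (fun _ => 0) = 0.
Proof. induction n as [|n IH]; simpl; [easy|]. rewrite IH. lra. Qed.

Lemma rsum_le (n : nat) (f g : nat -> R) :
  (forall k, (k < n)%nat -> f k <= g k) -> rsum n f <= rsum n g.
Proof.
  revert f g; induction n as [|n IH]; intros f g H; simpl; [lra|].
  pose proof (IH f g ltac:(intros; apply H; lia)). pose proof (H n ltac:(lia)). lra.
Qed.

Lemma rsum_nonneg (n : nat) (f : nat -> R) :
  (forall k, (k < n)%nat -> 0 <= f k) -> 0 <= rsum n f.
Proof.
  intros H. rewrite <- (rsum_zero n). now apply rsum_le.
Qed.

Lemma rsum_pos (n : nat) (f : nat -> R) (i : nat) :
  (i < n)%nat -> 0 < f i -> (forall k, (k < n)%nat -> 0 <= f k) -> 0 < rsum n f.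
Proof.
  revert i; induction n as [|n IH]; intros i Hi Hfi H; simpl; [lia|].
  destruct (Nat.eq_dec i n) as [->|Hne].
  - pose proof (rsum_nonneg n f ltac:(intros; apply H; lia)). lra.
  - pose proof (IH i ltac:(lia) Hfi ltac:(intros; apply H; lia)). pose proof (H n ltac:(lia)). lra.
Qed.

Lemma rsum_continuous (n : nat) (f : nat -> R -> R) (x : R) :
  (forall k, (k < n)%nat -> continuity_pt (f k) x) ->
  continuity_pt (fun y => rsum n (fun k => f k y)) x.
Proof.
  revert f; induction n as [|n IH]; intros f H; simpl.
  - apply continuity_pt_const. intros u w; reflexivity.
  - apply (continuity_pt_plus (fun y => rsum n (fun k => f k y)) (f n)).
    + apply IH. intros k Hk. apply H. lia.
    + apply H. lia.
Qed.

Lemma rsum_single (n i : nat) (F : nat -> R) : (i < n)%nat ->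
  rsum n (fun k => if Nat.eqb k i then F k else 0) = F i.
Proof.
  revert i; induction n as [|n IH]; intros i Hi; simpl; [lia|].
  destruct (Nat.eq_dec i n) as [->|Hne].
  - rewrite Nat.eqb_refl, (rsum_ext n _ (fun _ => 0)), rsum_zero; [lra|].
    intros k Hk. destruct (Nat.eqb_spec k n); [lia|easy].
  - rewrite IH by lia. destruct (Nat.eqb_spec n i); [lia|lra].
Qed.

Lemma sum_in_single (n : nat) (S : nat -> bool) (i : nat) (F : nat -> R) :
  (i < n)%nat -> (forall k, (k < n)%nat -> S k = Nat.eqb k i) -> sum_in n S F = F i.
Proof.
  intros Hi HS. unfold sum_in.
  rewrite (rsum_ext n _ (fun k => if Nat.eqb k i then F k else 0)).
  - now apply rsum_single.
  - intros k Hk. now rewrite HS.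
Qed.

Lemma sum_in_pair (n : nat) (S : nat -> bool) (i j : nat) (F : nat -> R) :
  (i < n)%nat -> (j < n)%nat -> i <> j ->
  (forall k, (k < n)%nat -> S k = (Nat.eqb k i || Nat.eqb k j)%bool) ->
  sum_in n S F = F i + F j.
Proof.
  intros Hi Hj Hij HS. unfold sum_in.
  rewrite (rsum_ext n _ (fun k => (if Nat.eqb k i then F k else 0)
                                  + (if Nat.eqb k j then F k else 0))).
  - now rewrite rsum_plus, !rsum_single.
  - intros k Hk. rewrite HS by easy.
    destruct (Nat.eqb_spec k i), (Nat.eqb_spec k j); simpl; lia || lra.
Qed.

Lemma card_in_0 (n : nat) (S : nat -> bool) :
  card_in n S = 0%nat -> forall k, (k < n)%nat -> S k = false.
Proof.
  induction n as [|n IH]; intros H k Hk; simpl in H; [lia|].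
  destruct (S n) eqn:Sn; [lia|]. rewrite Nat.add_0_r in H.
  destruct (Nat.eq_dec k n) as [->|]; [easy|]. apply IH; [easy|lia].
Qed.

Lemma card_in_1 (n : nat) (S : nat -> bool) : card_in n S = 1%nat ->
  exists i, (i < n)%nat /\ forall k, (k < n)%nat -> S k = Nat.eqb k i.
Proof.
  induction n as [|n IH]; intros H; simpl in H; [lia|].
  destruct (S n) eqn:Sn.
  - exists n. split; [lia|]. intros k Hk.
    destruct (Nat.eqb_spec k n) as [->|Hkn]; [easy|].
    apply (card_in_0 n); lia.
  - rewrite Nat.add_0_r in H. destruct (IH H) as [i [Hi HS]].
    exists i. split; [lia|]. intros k Hk.
    destruct (Nat.eq_dec k n) as [->|]; [|apply HS; lia].
    rewrite Sn. destruct (Nat.eqb_spec n i); [lia|easy].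
Qed.

Lemma card_in_2 (n : nat) (S : nat -> bool) : card_in n S = 2%nat ->
  exists i j, (i < j)%nat /\ (j < n)%nat /\
    forall k, (k < n)%nat -> S k = (Nat.eqb k i || Nat.eqb k j)%bool.
Proof.
  induction n as [|n IH]; intros H; simpl in H; [lia|].
  destruct (S n) eqn:Sn.
  - destruct (card_in_1 n S ltac:(lia)) as [i [Hi HS]].
    exists i, n. do 2 (split; [lia|]). intros k Hk.
    destruct (Nat.eqb_spec k n) as [->|Hkn]; [now rewrite Sn, Bool.orb_true_r|].
    rewrite Bool.orb_false_r. apply HS. lia.
  - rewrite Nat.add_0_r in H. destruct (IH H) as [i [j [Hij [Hj HS]]]].
    exists i, j. do 2 (split; [lia|]). intros k Hk.
    destruct (Nat.eq_dec k n) as [->|]; [|apply HS; lia].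
    rewrite Sn. destruct (Nat.eqb_spec n i), (Nat.eqb_spec n j); easy || lia.
Qed.

(* An equation F q = 1 - q has a root in (0,1) when F is continuous and
   positive at 1 and F q <= C q: the function F q + q - 1 is negative at
   q = 1/(C+2) and positive at q = 1. *)
Lemma share_equation_root (F : R -> R) (C : R) :
  (forall q, 0 < q -> continuity_pt F q) -> 0 < F 1 -> 0 <= C ->
  (forall q, 0 < q -> F q <= C * q) -> exists q, 0 < q < 1 /\ F q = 1 - q.
Proof.
  intros HF HF1 HC Hbound.
  set (d := / (C + 2)).
  assert (Hd2 : (C + 2) * d = 1) by (unfold d; field; lra).
  assert (Hd : 0 < d) by (unfold d; apply Rinv_0_lt_compat; lra).
  destruct (IVT_interv (fun q => F q + q - 1) d 1) as [z [Hz HFz]].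
  - intros c Hc. apply continuity_pt_minus; [apply continuity_pt_plus|].
    + apply HF. lra.
    + apply continuity_pt_id.
    + apply continuity_pt_const. intros u w; reflexivity.
  - nra.
  - pose proof (Hbound d Hd). nra.
  - lra.
  - exists z. assert (z <> 1) by (intros ->; lra). lra.
Qed.

Lemma qbar0_spec (n : nat) (theta : nat -> R) (S : nat -> bool) :
  nonempty_in n S ->
  0 < qbar0 n theta S < 1 /\
  sum_in n S (fun i => V (qbar0 n theta S * exp (theta i - 1))) = 1 - qbar0 n theta S.
Proof.
  intros [i0 [Hi0 HSi0]]. unfold qbar0. apply epsilon_spec.
  set (a := fun i => exp (theta i - 1)).
  assert (Ha : forall i, 0 < a i) by (intros; apply exp_pos).
  apply (share_equation_root _ (sum_in n S a)); unfold sum_in.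
  - intros q Hq. apply (rsum_continuous n (fun k y => if S k then V (y * a k) else 0)).
    intros k _. destruct (S k).
    + apply (continuity_pt_comp (fun y => y * a k) V).
      * apply continuity_pt_mult; [apply continuity_pt_id|].
        apply continuity_pt_const. intros u w; reflexivity.
      * apply V_continuous. pose proof (Ha k). nra.
    + apply continuity_pt_const. intros u w; reflexivity.
  - apply (rsum_pos n _ i0 Hi0).
    + rewrite HSi0. apply V_spec. rewrite Rmult_1_l. apply Ha.
    + intros k _. destruct (S k); [|lra].
      left. apply V_spec. rewrite Rmult_1_l. apply Ha.
  - apply rsum_nonneg. intros k _. destruct (S k); [left; apply Ha|lra].
  - intros q Hq. rewrite <- rsum_mult_r. apply rsum_le. intros k _.
    destruct (S k); [|lra].
    left. rewrite Rmult_comm. apply V_lt_id. pose proof (Ha k). nra.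
Qed.

(* The revenue of a seller with market share v is its odds v/(1-v). *)
Definition odds (v : R) : R := v / (1 - v).

Lemma odds_increasing (u w : R) : u < w -> w < 1 -> odds u < odds w.
Proof.
  intros Huw Hw. unfold odds. apply Rmult_lt_reg_r with ((1 - u) * (1 - w)); [nra|].
  field_simplify; lra.
Qed.

Lemma odds_pos (v : R) : 0 < v < 1 -> 0 < odds v.
Proof. intros Hv. unfold odds. apply Rdiv_lt_0_compat; lra. Qed.

Lemma single_equilibrium (n : nat) (theta : nat -> R) (T : nat -> bool) (i : nat) :
  (i < n)%nat -> (forall k, (k < n)%nat -> T k = Nat.eqb k i) ->
  let q := qbar0 n theta T in
  0 < q < 1 /\ V (q * exp (theta i - 1)) = 1 - q /\
  rebar n theta T = odds (V (q * exp (theta i - 1))).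
Proof.
  intros Hi HT q.
  assert (Hne : nonempty_in n T) by (exists i; rewrite HT, Nat.eqb_refl; easy).
  destruct (qbar0_spec n theta T Hne) as [Hq Heq].
  rewrite (sum_in_single n T i) in Heq by easy.
  unfold rebar. rewrite (sum_in_single n T i) by easy. easy.
Qed.

Lemma pair_equilibrium (n : nat) (theta : nat -> R) (T : nat -> bool) (i j : nat) :
  (i < n)%nat -> (j < n)%nat -> i <> j ->
  (forall k, (k < n)%nat -> T k = (Nat.eqb k i || Nat.eqb k j)%bool) ->
  let q := qbar0 n theta T in
  0 < q < 1 /\ V (q * exp (theta i - 1)) + V (q * exp (theta j - 1)) = 1 - q /\
  rebar n theta T = odds (V (q * exp (theta i - 1))) + odds (V (q * exp (theta j - 1))).
Proof.
  intros Hi Hj Hij HT q.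
  assert (Hne : nonempty_in n T) by (exists i; rewrite HT, Nat.eqb_refl; easy).
  destruct (qbar0_spec n theta T Hne) as [Hq Heq].
  rewrite (sum_in_pair n T i j) in Heq by easy.
  unfold rebar. rewrite (sum_in_pair n T i j) by easy. easy.
Qed.

(* Revenue of a two-seller market as a function of the odds r of one seller,
   whose weight is a = e^(theta-1): the equilibrium relation e^r = q a / v
   determines the market share of the other seller from r alone. *)
Definition revenue_curve (a r : R) : R :=
  r - 1 + (1 + r) / (r * (1 + exp r / a)).

(* The derivative of revenue_curve is slope_num / (1 + e^r/a)^2, and
   slope_num_deriv is the derivative of slope_num. *)
Definition slope_num (a r : R) : R :=
  1 + exp r / a + (exp r / a) ^ 2 - (1 + exp r / a * (1 + r)) / r ^ 2.

Definition slope_num_deriv (a r : R) : R :=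
  exp r / a + 2 * (exp r / a) ^ 2 - exp r / a / r + 2 / r ^ 3 + 2 * (exp r / a) / r ^ 3.

Lemma revenue_curve_deriv (a r : R) : 0 < a -> 0 < r ->
  derivable_pt_lim (revenue_curve a) r (slope_num a r / (1 + exp r / a) ^ 2).
Proof.
  intros Ha Hr. apply is_derive_Reals. unfold revenue_curve.
  pose proof (exp_pos r).
  assert (0 < exp r / a) by (apply Rdiv_lt_0_compat; [apply exp_pos|lra]).
  auto_derive.
  - apply Rgt_not_eq. apply Rmult_lt_0_compat; [lra|]. unfold Rdiv in *. lra.
  - unfold slope_num. field. unfold Rdiv in *. repeat split; lra.
Qed.

Lemma slope_num_deriv_spec (a r : R) : 0 < a -> 0 < r ->
  derivable_pt_lim (slope_num a) r (slope_num_deriv a r).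
Proof.
  intros Ha Hr. apply is_derive_Reals. unfold slope_num.
  auto_derive.
  - repeat split; try lra. apply Rgt_not_eq. nra.
  - unfold slope_num_deriv. field. lra.
Qed.

(* slope_num' > 0: after grouping, every term is positive because
   r^3 - r^2 + 2 > 0 for r > 0. *)
Lemma slope_num_deriv_pos (a r : R) : 0 < a -> 0 < r -> 0 < slope_num_deriv a r.
Proof.
  intros Ha Hr. unfold slope_num_deriv. set (E := exp r / a).
  assert (0 < E) by (unfold E; apply Rdiv_lt_0_compat; [apply exp_pos|lra]).
  assert (Hgroup : E + 2 * E ^ 2 - E / r + 2 / r ^ 3 + 2 * E / r ^ 3
                   = (E * (r ^ 3 - r ^ 2 + 2) + 2) / r ^ 3 + 2 * E ^ 2) by (field; lra).
  rewrite Hgroup.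
  assert (0 < r ^ 3 - r ^ 2 + 2) by (destruct (Rle_lt_dec r 1); simpl; nra).
  assert (0 < r ^ 3) by (apply pow_lt; lra).
  assert (0 < (E * (r ^ 3 - r ^ 2 + 2) + 2) / r ^ 3) by (apply Rdiv_lt_0_compat; nra).
  nra.
Qed.

Lemma slope_num_increasing (a c d : R) : 0 < a -> 0 < c -> c < d ->
  slope_num a c < slope_num a d.
Proof.
  intros Ha Hc Hcd.
  destruct (MVT_cor2 (slope_num a) (slope_num_deriv a) c d) as [e [He Hce]]; [easy| |].
  - intros e He. apply slope_num_deriv_spec; lra.
  - pose proof (slope_num_deriv_pos a e Ha ltac:(lra)). nra.
Qed.

(* The revenue curve is quasi-convex on (0,oo): its slope has the sign of the
   increasing function slope_num, so the curve first decreases, then increases. *)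
Lemma revenue_curve_quasiconvex (a x x0 R : R) : 0 < a -> 0 < x -> x <= x0 -> x0 < R ->
  revenue_curve a R <= revenue_curve a x0 -> revenue_curve a x0 <= revenue_curve a x.
Proof.
  intros Ha Hx Hxx0 Hx0R HR.
  destruct (Req_dec x x0) as [->|Hne]; [lra|].
  destruct (Rle_or_lt (revenue_curve a x0) (revenue_curve a x)) as [L|L]; [easy|].
  exfalso.
  assert (Hden : forall r, 0 < (1 + exp r / a) ^ 2).
  { intro r. assert (0 < exp r / a) by (apply Rdiv_lt_0_compat; [apply exp_pos|lra]). nra. }
  destruct (MVT_cor2 (revenue_curve a) (fun r => slope_num a r / (1 + exp r / a) ^ 2) x x0)
    as [c [Hslope_c Hc]]; [lra| intros c Hc; apply revenue_curve_deriv; lra |].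
  destruct (MVT_cor2 (revenue_curve a) (fun r => slope_num a r / (1 + exp r / a) ^ 2) x0 R)
    as [d [Hslope_d Hd]]; [lra| intros d Hd; apply revenue_curve_deriv; lra |].
  (* The slope is positive at c, hence at d > c, contradicting HR. *)
  assert (Hc_pos : 0 < slope_num a c).
  { assert (Hsc : 0 < slope_num a c / (1 + exp c / a) ^ 2) by nra.
    apply Rmult_lt_reg_r with (/ (1 + exp c / a) ^ 2).
    - apply Rinv_0_lt_compat, Hden.
    - rewrite Rmult_0_l. exact Hsc. }
  pose proof (slope_num_increasing a c d Ha ltac:(lra) ltac:(lra)).
  assert (0 < slope_num a d / (1 + exp d / a) ^ 2)
    by (apply Rdiv_lt_0_compat; [lra|apply Hden]).
  nra.
Qed.

Lemma pair_revenue (a b q : R) : 0 < a -> 0 < b -> 0 < q < 1 ->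
  V (q * a) + V (q * b) = 1 - q ->
  odds (V (q * a)) + odds (V (q * b)) = revenue_curve a (odds (V (q * a))).
Proof.
  intros Ha Hb Hq Heq.
  destruct (V_spec (q * a) ltac:(nra)) as [Hv Hva].
  destruct (V_spec (q * b) ltac:(nra)) as [Hw _].
  set (v := V (q * a)) in *. set (w := V (q * b)) in *.
  unfold Vinv in Hva. unfold revenue_curve, odds.
  assert (Hexp : exp (v / (1 - v)) = q * a / v)
    by (apply Rmult_eq_reg_l with v; [rewrite Hva; field|]; lra).
  rewrite Hexp. replace w with (1 - q - v) by lra.
  field. repeat split; lra.
Qed.

Lemma single_revenue (a q : R) : 0 < a -> 0 < q < 1 -> V (q * a) = 1 - q ->
  revenue_curve a (odds (V (q * a))) = odds (V (q * a)).
Proof.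
  intros Ha Hq Heq.
  destruct (V_spec (q * a) ltac:(nra)) as [Hv Hva].
  set (v := V (q * a)) in *. unfold Vinv in Hva. unfold revenue_curve, odds.
  assert (Hexp : exp (v / (1 - v)) = q * a / v)
    by (apply Rmult_eq_reg_l with v; [rewrite Hva; field|]; lra).
  rewrite Hexp. replace q with (1 - v) by lra. field. repeat split; lra.
Qed.

Lemma share_pair_lt_single (a b q qA : R) : 0 < a -> 0 < b -> 0 < q < 1 -> 0 < qA < 1 ->
  V (q * a) + V (q * b) = 1 - q -> V (qA * a) = 1 - qA ->
  V (q * a) < V (qA * a).
Proof.
  intros Ha Hb Hq HqA Hpair Hsingle.
  destruct (V_spec (q * b) ltac:(nra)) as [Hw _].
  destruct (Rlt_or_le (V (q * a)) (V (qA * a))) as [L|L]; [easy|]. exfalso.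
  destruct (Rlt_or_le q qA) as [Lq|Lq]; [|lra].
  pose proof (V_increasing (q * a) (qA * a) ltac:(nra) ltac:(nra)). lra.
Qed.

Lemma share_antitone_competitor (a b b' q q' : R) :
  0 < a -> 0 < b -> b <= b' -> 0 < q < 1 -> 0 < q' < 1 ->
  V (q * a) + V (q * b) = 1 - q -> V (q' * a) + V (q' * b') = 1 - q' ->
  V (q' * a) <= V (q * a).
Proof.
  intros Ha Hb Hbb Hq Hq' Heq Heq'.
  destruct (Rle_or_lt (V (q' * a)) (V (q * a))) as [L|L]; [easy|]. exfalso.
  destruct (Rle_or_lt q' q) as [Lq|Lq].
  - destruct (Req_dec q' q) as [->|Hne]; [lra|].
    pose proof (V_increasing (q' * a) (q * a) ltac:(nra) ltac:(nra)). lra.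
  - pose proof (V_increasing (q * b) (q' * b') ltac:(nra) ltac:(nra)). lra.
Qed.

(* Let a seller of weight a face a competitor of weight b,
   and suppose the pair earns at least as much as the a-seller alone.  Then
   replacing the competitor by a stronger one (b' >= b) does not decrease the
   revenue: the a-seller's odds move from x0 to x <= x0 along the revenue
   curve, while being alone corresponds to odds R > x0. *)
Lemma exchange_stronger_competitor (a b b' q q' qA : R) :
  0 < a -> 0 < b -> b <= b' -> 0 < q < 1 -> 0 < q' < 1 -> 0 < qA < 1 ->
  V (q * a) + V (q * b) = 1 - q -> V (q' * a) + V (q' * b') = 1 - q' ->
  V (qA * a) = 1 - qA ->
  odds (V (qA * a)) <= odds (V (q * a)) + odds (V (q * b)) ->
  odds (V (q * a)) + odds (V (q * b)) <= odds (V (q' * a)) + odds (V (q' * b')).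
Proof.
  intros Ha Hb Hbb Hq Hq' HqA Heq Heq' HeqA Hsingle_le.
  rewrite (pair_revenue a b q), (pair_revenue a b' q') by (easy || lra).
  rewrite (pair_revenue a b q), <- (single_revenue a qA) in Hsingle_le by easy.
  destruct (V_spec (q' * a) ltac:(nra)) as [Hv' _].
  destruct (V_spec (qA * a) ltac:(nra)) as [HvA _].
  destruct (V_spec (q * a) ltac:(nra)) as [Hv _].
  apply revenue_curve_quasiconvex with (odds (V (qA * a))); [easy|..].
  - now apply odds_pos.
  - pose proof (share_antitone_competitor a b b' q q' Ha Hb Hbb Hq Hq' Heq Heq').
    destruct (Req_dec (V (q' * a)) (V (q * a))) as [->|Hne]; [lra|].
    left. apply odds_increasing; lra.
  - apply odds_increasing; [|lra]. now apply (share_pair_lt_single a b q qA).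
  - easy.
Qed.

Lemma rebar_exchange (n : nat) (theta : nat -> R) (Tj T T' : nat -> bool) (j i i' : nat) :
  (j < n)%nat -> (i < n)%nat -> (i' < n)%nat -> i <> j -> i' <> j -> theta i <= theta i' ->
  (forall k, (k < n)%nat -> Tj k = Nat.eqb k j) ->
  (forall k, (k < n)%nat -> T k = (Nat.eqb k j || Nat.eqb k i)%bool) ->
  (forall k, (k < n)%nat -> T' k = (Nat.eqb k j || Nat.eqb k i')%bool) ->
  rebar n theta Tj <= rebar n theta T -> rebar n theta T <= rebar n theta T'.
Proof.
  intros Hj Hi Hi' Hij Hi'j Hth HTj HT HT' Hsingle_le.
  destruct (single_equilibrium n theta Tj j Hj HTj) as [HqA [HeqA Rj]].
  destruct (pair_equilibrium n theta T j i Hj Hi ltac:(lia) HT) as [Hq [Heq RT]].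
  destruct (pair_equilibrium n theta T' j i' Hj Hi' ltac:(lia) HT') as [Hq' [Heq' RT']].
  rewrite Rj, RT in Hsingle_le. rewrite RT, RT'.
  apply exchange_stronger_competitor with (qA := qbar0 n theta Tj); try easy.
  - apply exp_pos.
  - apply exp_pos.
  - destruct (Req_dec (theta i) (theta i')) as [->|Hne]; [lra|].
    left. apply exp_increasing. lra.
Qed.

Theorem theorem8 (n : nat) (theta : nat -> R)
  (hn : (2 <= n)%nat)
  (hmono : forall i j : nat, (i <= j)%nat -> (j < n)%nat -> theta j <= theta i)
  (hnn : forall i : nat, (i < n)%nat -> 0 <= theta i) :
  (exists S : nat -> bool, maximizes_rebar n theta S /\ card_in n S = 2%nat) ->
  maximizes_rebar n theta top2.
Proof.
  intros [S [[_ HSmax] Hcard]].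
  destruct (card_in_2 n S Hcard) as [i [j [Hij [Hj HS]]]].
  assert (Hsingle : forall m, (m < n)%nat -> nonempty_in n (fun k => Nat.eqb k m))
    by (intros m Hm; exists m; now rewrite Nat.eqb_refl).
  set (T1 := fun k => (Nat.eqb k j || Nat.eqb k 0)%bool).
  assert (Hstep1 : rebar n theta S <= rebar n theta T1).
  { apply (rebar_exchange n theta (fun k => Nat.eqb k j) S T1 j i 0);
      try easy; try lia.
    - apply hmono; lia.
    - intros k Hk. rewrite HS by easy. apply Bool.orb_comm.
    - apply HSmax, Hsingle, Hj. }
  assert (Hstep2 : rebar n theta T1 <= rebar n theta top2).
  { apply (rebar_exchange n theta (fun k => Nat.eqb k 0) T1 top2 0 j 1);
      try easy; try lia.
    - apply hmono; lia.
    - intros k Hk. apply Bool.orb_comm.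
    - intros k Hk. destruct k as [|[|k]]; reflexivity.
    - pose proof (HSmax _ (Hsingle 0%nat ltac:(lia))). lra. }
  split.
  - exists 0%nat. split; [lia|easy].
  - intros T HT. pose proof (HSmax T HT). lra.
Qed.
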